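(* For $\sigma>0$ and $k\ge 0$, define the price-to-delta ratio $$C_{\mathcal D}(\sigma;k)=\frac{C_{\mathrm{BS}}(\sigma;k)}{\Phi(d_1(\sigma;k))}=1-e^k\frac{\Phi(d_2(\sigma;k))}{\Phi(d_1(\sigma;k))}=1-\frac{R(-d_2(\sigma;k))}{R(-d_1(\sigma;k))}.$$ Then $C_{\mathcal D}(\sigma;k)$ is monotonically increasing in $\sigma>0$ for each fixed $k\ge0$, and monotonically decreasing in $k\ge 0$ for each fixed $\sigma>0$.
   Context: Let $\Phi$ and $\phi$ denote the standard normal distribution function and density, and let $R(x)=\Phi(-x)/\phi(x)$ be the Mills ratio. For $\sigma>0$, $k\ge 0$ put $d_1(\sigma;k)=-k/\sigma+\sigma/2$, $d_2(\sigma;k)=-k/\sigma-\sigma/2$, and $C_{\mathrm{BS}}(\sigma;k)=\Phi(d_1(\sigma;k))-e^k\,\Phi(d_2(\sigma;k))$. *)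

From Stdlib Require Import Reals.
From Coquelicot Require Import Coquelicot.
Open Scope R_scope.

Definition phi (x : R) : R := exp (- x ^ 2 / 2) / sqrt (2 * PI).

Definition Phi (x : R) : R :=
  RInt_gen phi (Rbar_locally m_infty) (at_point x).

Definition Mills (x : R) : R := Phi (- x) / phi x.

Definition d1 (sigma k : R) : R := - k / sigma + sigma / 2.
Definition d2 (sigma k : R) : R := - k / sigma - sigma / 2.

Definition C_BS (sigma k : R) : R :=
  Phi (d1 sigma k) - exp k * Phi (d2 sigma k).

Definition C_D (sigma k : R) : R := C_BS sigma k / Phi (d1 sigma k).

(* Writing C_D(s,k) = 1 - g(s,k) with g(s,k) = e^k Phi(d2)/Phi(d1), it suffices
   to show that g increases in k and decreases in s.  Differentiating, the sign
   of dg/dk is that of W(d1) - W(d2) with W(x) = x + phi(x)/Phi(x), and the sign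
   of -dg/ds is that of P(d1) - P(d2) with P(x) = x Phi(x)/phi(x); since d2 <= d1
   both signs are nonnegative once W and P are known to be nondecreasing.

   Monotonicity of W and P reduces, through W' = V/Phi^2 and P' = F/phi, to the
   nonnegativity of a tower of three functions
       E = x Phi + phi,   F = (1+x^2) Phi + x phi,   V = Phi (Phi - x phi) - phi^2,
   whose derivatives are E' = Phi, F' = 2E and V' = phi F.  Each is therefore
   nondecreasing as soon as the previous one is nonnegative, and a nondecreasing
   function that is bounded below by a quantity vanishing at -oo is nonnegative. *)
From Pilot Require Import Defs.
From Stdlib Require Import Reals Lra Psatz.
From Coquelicot Require Import Coquelicot.
Open Scope R_scope.

Lemma exp_le_compat x y : x <= y -> exp x <= exp y.
Proof.
  intros [Hlt | ->]; [now left; apply exp_increasing | apply Rle_refl].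
Qed.

Lemma phi_pos x : 0 < phi x.
Proof.
  apply Rdiv_lt_0_compat; [apply exp_pos |].
  apply sqrt_lt_R0; generalize PI_RGT_0; lra.
Qed.

Lemma phi_neq0 x : phi x <> 0.
Proof. apply Rgt_not_eq, phi_pos. Qed.

Lemma phi_deriv x : is_derive phi x (- x * phi x).
Proof.
  unfold phi. auto_derive; [easy |].
  replace (- (x * (x * 1)) * / 2) with (- x ^ 2 / 2) by (simpl; field).
  match goal with |- ?a = ?b => change (@eq R a b) end.
  field. apply Rgt_not_eq, sqrt_lt_R0. generalize PI_RGT_0; lra.
Qed.

Lemma Derive_phi x : Derive phi x = - x * phi x.
Proof. apply is_derive_unique, phi_deriv. Qed.

Lemma ex_derive_phi x : ex_derive phi x.
Proof. eexists; apply phi_deriv. Qed.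

Lemma phi_cont x : continuous phi x.
Proof. apply (@ex_derive_continuous R_AbsRing R_NormedModule), ex_derive_phi. Qed.

Lemma ex_RInt_phi a b : ex_RInt phi a b.
Proof. apply (@ex_RInt_continuous R_CompleteNormedModule); intros; apply phi_cont. Qed.

(* Since sqrt(2 pi) >= 1, phi is dominated by the unnormalised Gaussian. *)
Lemma phi_le_gauss t : phi t <= exp (- t ^ 2 / 2).
Proof.
  assert (H1 : 1 <= sqrt (2 * PI)).
  { rewrite <- sqrt_1. apply sqrt_le_1_alt. generalize PI2_1; lra. }
  unfold phi, Rdiv at 1.
  rewrite <- (Rmult_1_r (exp (- t ^ 2 / 2))) at 2.
  apply Rmult_le_compat_l; [left; apply exp_pos |].
  rewrite <- Rinv_1. apply Rinv_le_contravar; lra.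
Qed.

Lemma phi_le_1 t : phi t <= 1.
Proof.
  eapply Rle_trans; [apply phi_le_gauss |].
  rewrite <- exp_0. apply exp_le_compat. simpl. nra.
Qed.

(* An integrable exponential majorant: -t^2/2 <= t + 1/2 since (t+1)^2 >= 0. *)
Lemma phi_le_exp t : phi t <= exp (t + /2).
Proof.
  eapply Rle_trans; [apply phi_le_gauss |].
  apply exp_le_compat.
  assert (0 <= (t + 1) * (t + 1)) by apply Rle_0_sqr. simpl; lra.
Qed.

Lemma is_RInt_exp_shift a b :
  is_RInt (fun t => exp (t + /2)) a b (exp (b + /2) - exp (a + /2)).
Proof.
  apply (is_RInt_derive (fun t => exp (t + /2)) (fun t => exp (t + /2))).
  - intros x _. auto_derive; [easy | ring].
  - intros x _. apply (@ex_derive_continuous R_AbsRing R_NormedModule).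
    auto_derive; easy.
Qed.

Lemma RInt_phi_bound a b :
  a <= b -> 0 <= RInt phi a b <= exp (b + /2) - exp (a + /2).
Proof.
  intros Hab. split.
  - apply RInt_ge_0; [exact Hab | apply ex_RInt_phi | intros; left; apply phi_pos].
  - apply (is_RInt_le phi (fun t => exp (t + /2)) a b); [exact Hab | | |].
    + apply (@RInt_correct R_CompleteNormedModule), ex_RInt_phi.
    + apply is_RInt_exp_shift.
    + intros; apply phi_le_exp.
Qed.

Lemma RInt_phi_chasles a b c : RInt phi a b + RInt phi b c = RInt phi a c.
Proof. apply (@RInt_Chasles R_CompleteNormedModule); apply ex_RInt_phi. Qed.

Lemma RInt_phi_cauchy u v x :
  u <= v -> Rabs (RInt phi u x - RInt phi v x) <= exp (v + /2).
Proof.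
  intros Huv.
  assert (E : RInt phi u x - RInt phi v x = RInt phi u v)
    by (rewrite <- (RInt_phi_chasles u v x); ring).
  rewrite E.
  destruct (RInt_phi_bound u v Huv) as [H0 H1].
  rewrite Rabs_right by lra. generalize (exp_pos (u + /2)); lra.
Qed.

Lemma Phi_ex x :
  exists l, is_RInt_gen phi (Rbar_locally m_infty) (at_point x) l
            /\ 0 <= l <= exp (x + /2).
Proof.
  set (F := filter_prod (Rbar_locally m_infty) (at_point x)).
  set (f := fun ab : R * R => RInt phi (fst ab) (snd ab)).
  assert (PF : ProperFilter F) by (apply filter_prod_proper; apply _).
  destruct (proj1 (filterlim_locally_cauchy (U := R_CompleteSpace) f)) as [l Hl].
  - intros eps.
    exists (fun ab : R * R => fst ab < ln eps - 1 /\ snd ab = x). split.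
    + apply (Filter_prod _ _ _ (fun a => a < ln eps - 1) (fun b => b = x));
        [now exists (ln eps - 1) | reflexivity | now simpl].
    + intros [a b] [a' b'] [Ha Hb] [Ha' Hb']; simpl in *; subst b b'.
      change (Rabs (RInt phi a' x - RInt phi a x) < eps).
      assert (Hsmall : forall v, v < ln eps - 1 -> exp (v + /2) < eps).
      { intros v Hv. rewrite <- (exp_ln eps) by apply cond_pos.
        apply exp_increasing; lra. }
      destruct (Rle_or_lt a a') as [Hle | Hlt].
      * rewrite Rabs_minus_sym.
        eapply Rle_lt_trans; [apply RInt_phi_cauchy, Hle | now apply Hsmall].
      * eapply Rle_lt_trans; [apply RInt_phi_cauchy; lra | now apply Hsmall].
  - exists l. split.
    + refine (filterlimi_lim_ext (F := F) f _ _ Hl). intros [a b].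
      apply (@RInt_correct R_CompleteNormedModule), ex_RInt_phi.
    + assert (Hev : F (fun ab => 0 <= f ab <= exp (x + /2))).
      { apply (Filter_prod _ _ _ (fun a => a < x) (fun b => b = x));
          [now exists x | reflexivity |].
        intros a b Ha ->. unfold f; simpl.
        destruct (RInt_phi_bound a x) as [H1 H2]; [lra |].
        generalize (exp_pos (a + /2)); lra. }
      split.
      * apply (filterlim_le (F := F) (fun _ => 0) f 0 l);
          [| apply filterlim_const | exact Hl].
        eapply filter_imp; [| exact Hev]; simpl; intros; tauto.
      * apply (filterlim_le (F := F) f (fun _ => exp (x + /2)) l (exp (x + /2)));
          [| exact Hl | apply filterlim_const].
        eapply filter_imp; [| exact Hev]; simpl; intros; tauto.
Qed.

Lemma Phi_is x :
  is_RInt_gen phi (Rbar_locally m_infty) (at_point x) (Phi x)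
  /\ 0 <= Phi x <= exp (x + /2).
Proof.
  destruct (Phi_ex x) as [l [Hl Hb]].
  replace (Phi x) with l; [easy |].
  symmetry. apply (@is_RInt_gen_unique R_CompleteNormedModule); [apply _ .. | exact Hl].
Qed.

Lemma Phi_le x : Phi x <= exp (x + /2).
Proof. apply (Phi_is x). Qed.

Lemma Phi_chasles a b : Phi b = Phi a + RInt phi a b.
Proof.
  unfold Phi at 1. apply (@is_RInt_gen_unique R_CompleteNormedModule); [apply _ .. |].
  apply (is_RInt_gen_Chasles phi a _ _ (proj1 (Phi_is a))).
  apply is_RInt_gen_at_point, (@RInt_correct R_CompleteNormedModule), ex_RInt_phi.
Qed.

Lemma Phi_pos x : 0 < Phi x.
Proof.
  rewrite (Phi_chasles (x - 1) x).
  assert (0 < RInt phi (x - 1) x)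
    by (apply RInt_gt_0; [lra | intros; apply phi_pos | intros; apply phi_cont]).
  destruct (Phi_is (x - 1)) as [_ [H0 _]]. lra.
Qed.

Lemma Phi_neq0 x : Phi x <> 0.
Proof. apply Rgt_not_eq, Phi_pos. Qed.

Lemma Phi_deriv x : is_derive Phi x (phi x).
Proof.
  apply is_derive_ext with (fun b => Phi 0 + RInt phi 0 b);
    [intros; symmetry; apply Phi_chasles |].
  replace (phi x) with (@plus R_AbelianGroup zero (phi x)) by apply plus_zero_l.
  apply (@is_derive_plus R_AbsRing R_NormedModule);
    [apply (@is_derive_const R_AbsRing R_NormedModule) |].
  apply (is_derive_RInt phi (RInt phi 0) 0 x); [| apply phi_cont].
  apply filter_forall; intros; apply (@RInt_correct R_CompleteNormedModule), ex_RInt_phi.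
Qed.

Lemma Derive_Phi x : Derive Phi x = phi x.
Proof. apply is_derive_unique, Phi_deriv. Qed.

Lemma ex_derive_Phi x : ex_derive Phi x.
Proof. eexists; apply Phi_deriv. Qed.

Ltac derive_normal :=
  auto_derive;
  [ repeat split; auto using ex_derive_Phi, ex_derive_phi, Phi_neq0, phi_neq0 | ];
  change (fun y : R => Phi y) with Phi in *;
  change (fun y : R => phi y) with phi in *;
  rewrite ?Derive_Phi, ?Derive_phi;
  try match goal with |- ?a = ?b => change (@eq R a b) end.

Lemma mono_deriv f df a b :
  a <= b -> (forall x, a <= x <= b -> is_derive f x (df x)) ->
  (forall x, a <= x <= b -> 0 <= df x) -> f a <= f b.
Proof.
  intros Hab Hd Hp.
  destruct (MVT_gen f a b df) as [c [Hc E]].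
  - intros x Hx. rewrite Rmin_left, Rmax_right in Hx by lra. apply Hd; lra.
  - intros x Hx. rewrite Rmin_left, Rmax_right in Hx by lra.
    apply continuity_pt_filterlim, (@ex_derive_continuous R_AbsRing R_NormedModule).
    eexists; apply Hd; lra.
  - rewrite Rmin_left, Rmax_right in Hc by lra.
    assert (0 <= df c) by (apply Hp; lra). nra.
Qed.

Lemma tail_bound_vanishes eps :
  0 < eps -> exists M, forall y, y < M -> (1 - y) * exp (y + /2) < eps.
Proof.
  intros He.
  assert (Hlim : is_lim (fun y => exp (/2) * (exp y - y * exp y)) m_infty
                        (Rbar_mult (exp (/2)) (0 - 0))).
  { apply is_lim_scal_l, (is_lim_minus _ _ _ 0 0);
      [apply is_lim_exp_m | apply is_lim_mul_exp_m | reflexivity]. }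
  replace (Rbar_mult (exp (/2)) (0 - 0)) with (Finite 0) in Hlim
    by (simpl; f_equal; ring).
  destruct (proj2 (is_lim_spec _ _ _) Hlim (mkposreal eps He)) as [M HM].
  exists M. intros y Hy. specialize (HM y Hy); simpl in HM.
  rewrite Rminus_0_r in HM.
  replace ((1 - y) * exp (y + /2)) with (exp (/2) * (exp y - y * exp y))
    by (rewrite exp_plus; ring).
  eapply Rle_lt_trans; [apply Rle_abs | exact HM].
Qed.

Lemma nonneg_of_increasing (G : R -> R) :
  (forall u v, u <= v -> G u <= G v) ->
  (forall y, y < 0 -> - ((1 - y) * exp (y + /2)) <= G y) ->
  forall x, 0 <= G x.
Proof.
  intros Hmono Htail x. destruct (Rle_or_lt 0 (G x)) as [| Hneg]; [easy |].
  destruct (tail_bound_vanishes (- G x)) as [M HM]; [lra |].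
  set (y := Rmin (Rmin x 0) M - 1).
  assert (y <= x /\ y < 0 /\ y < M) as [H1 [H2 H3]].
  { unfold y. generalize (Rmin_l (Rmin x 0) M) (Rmin_r (Rmin x 0) M)
                         (Rmin_l x 0) (Rmin_r x 0). lra. }
  specialize (HM y H3). specialize (Htail y H2). specialize (Hmono y x H1). lra.
Qed.

Definition EE x := x * Phi x + phi x.

(* E' = Phi > 0, and E >= x Phi >= x e^(x+1/2) at -oo. *)
Lemma EE_nonneg x : 0 <= EE x.
Proof.
  apply nonneg_of_increasing; clear x.
  - intros u v Huv. apply (mono_deriv EE Phi); [exact Huv | |].
    + intros z _. unfold EE. derive_normal. ring.
    + intros z _. left; apply Phi_pos.
  - intros y Hy. unfold EE.
    generalize (Phi_le y) (Phi_pos y) (phi_pos y) (exp_pos (y + /2)). nra.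
Qed.

Definition FF x := (1 + x ^ 2) * Phi x + x * phi x.

(* F' = 2 E >= 0, and F >= x phi >= x e^(x+1/2) at -oo. *)
Lemma FF_nonneg x : 0 <= FF x.
Proof.
  apply nonneg_of_increasing; clear x.
  - intros u v Huv. apply (mono_deriv FF (fun z => 2 * EE z)); [exact Huv | |].
    + intros z _. unfold FF, EE. derive_normal. ring.
    + intros z _. generalize (EE_nonneg z); lra.
  - intros y Hy. unfold FF.
    generalize (phi_le_exp y) (Phi_pos y) (phi_pos y) (exp_pos (y + /2)). nra.
Qed.

Definition VV x := Phi x * (Phi x - x * phi x) - phi x ^ 2.

(* V' = phi F >= 0, and V >= -phi^2 >= -phi >= -e^(x+1/2) at -oo. *)
Lemma VV_nonneg x : 0 <= VV x.
Proof.
  apply nonneg_of_increasing; clear x.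
  - intros u v Huv. apply (mono_deriv VV (fun z => phi z * FF z)); [exact Huv | |].
    + intros z _. unfold VV, FF. derive_normal. ring.
    + intros z _. generalize (FF_nonneg z) (phi_pos z); nra.
  - intros y Hy. unfold VV.
    generalize (phi_le_exp y) (Phi_pos y) (phi_pos y) (exp_pos (y + /2)) (phi_le_1 y).
    intros. assert (0 <= - y * Phi y * phi y) by (apply Rmult_le_pos; nra).
    nra.
Qed.

Definition WW x := x + phi x / Phi x.

(* W' = V / Phi^2. *)
Lemma WW_mono u v : u <= v -> WW u <= WW v.
Proof.
  intros Huv. apply (mono_deriv WW (fun z => VV z / Phi z ^ 2)); [exact Huv | |].
  - intros z _. unfold WW, VV. derive_normal. field. apply Phi_neq0.
  - intros z _. apply Rdiv_le_0_compat; [apply VV_nonneg | apply pow_lt, Phi_pos].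
Qed.

Definition PP x := x * Phi x / phi x.

(* P' = F / phi. *)
Lemma PP_mono u v : u <= v -> PP u <= PP v.
Proof.
  intros Huv. apply (mono_deriv PP (fun z => FF z / phi z)); [exact Huv | |].
  - intros z _. unfold PP, FF. derive_normal. field. apply phi_neq0.
  - intros z _. apply Rdiv_le_0_compat; [apply FF_nonneg | apply phi_pos].
Qed.

(* The price-to-delta ratio.  Coquelicot also exports names d1, d2, hence the
   qualified Defs.d1, Defs.d2. *)

Definition gfun (s k : R) := exp k * Phi (Defs.d2 s k) / Phi (Defs.d1 s k).

Lemma CD_eq s k : C_D s k = 1 - gfun s k.
Proof. unfold C_D, C_BS, gfun. field. apply Phi_neq0. Qed.

Lemma d2_le_d1 s k : 0 < s -> Defs.d2 s k <= Defs.d1 s k.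
Proof. intros Hs. unfold Defs.d1, Defs.d2. lra. Qed.

(* dg/dk = e^k Phi(d2) / (s Phi(d1)) * (W(d1) - W(d2)), using d1 - d2 = s. *)
Lemma g_mono_k s k1 k2 : 0 < s -> k1 <= k2 -> gfun s k1 <= gfun s k2.
Proof.
  intros Hs Hk.
  apply (mono_deriv (fun k => gfun s k)
    (fun k => exp k / s
              * (Phi (Defs.d1 s k) * Phi (Defs.d2 s k)
                 * (WW (Defs.d1 s k) - WW (Defs.d2 s k)))
              / Phi (Defs.d1 s k) ^ 2)); [exact Hk | |].
  - intros z _. assert (s <> 0) by lra.
    unfold gfun, WW, Defs.d1, Defs.d2. derive_normal.
    unfold Rdiv, Rminus. field. split; auto using Phi_neq0.
  - intros z _.
    assert (HW : WW (Defs.d2 s z) <= WW (Defs.d1 s z)) by now apply WW_mono, d2_le_d1.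
    generalize (Phi_pos (Defs.d1 s z)) (Phi_pos (Defs.d2 s z)) (exp_pos z); intros.
    apply Rdiv_le_0_compat; [| apply pow_lt, Phi_pos].
    apply Rmult_le_pos; [apply Rdiv_le_0_compat; lra |].
    apply Rmult_le_pos; nra.
Qed.

(* -dg/ds = e^k phi(d1) phi(d2) (P(d1) - P(d2)) / (s Phi(d1)^2). *)
Lemma g_mono_s k s1 s2 : 0 < s1 -> s1 <= s2 -> gfun s2 k <= gfun s1 k.
Proof.
  intros Hs Hle. apply Ropp_le_cancel.
  apply (mono_deriv (fun s => - gfun s k)
    (fun s => exp k
              * (phi (Defs.d1 s k) * phi (Defs.d2 s k)
                 * (PP (Defs.d1 s k) - PP (Defs.d2 s k)))
              / (s * Phi (Defs.d1 s k) ^ 2))); [exact Hle | |].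
  - intros z Hz. assert (z <> 0) by lra.
    unfold gfun, PP, Defs.d1, Defs.d2. derive_normal.
    unfold Rdiv, Rminus. field. auto using Phi_neq0, phi_neq0.
  - intros z Hz.
    assert (HP : PP (Defs.d2 z k) <= PP (Defs.d1 z k)) by (apply PP_mono, d2_le_d1; lra).
    generalize (phi_pos (Defs.d1 z k)) (phi_pos (Defs.d2 z k)) (exp_pos k); intros.
    apply Rdiv_le_0_compat.
    + apply Rmult_le_pos; [lra |]. apply Rmult_le_pos; nra.
    + apply Rmult_lt_0_compat; [lra | apply pow_lt, Phi_pos].
Qed.

Theorem lemma1 :
  (forall k s1 s2 : R, 0 <= k -> 0 < s1 -> s1 <= s2 -> C_D s1 k <= C_D s2 k) /\
  (forall s k1 k2 : R, 0 < s -> 0 <= k1 -> k1 <= k2 -> C_D s k2 <= C_D s k1).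
Proof.
  split.
  - intros k s1 s2 _ Hs Hle. rewrite !CD_eq.
    generalize (g_mono_s k s1 s2 Hs Hle). lra.
  - intros s k1 k2 Hs _ Hle. rewrite !CD_eq.
    generalize (g_mono_k s k1 k2 Hs Hle). lra.
Qed.
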